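(* Let $G$ be a locally compact group with compact topological commutator subgroup $C=\overline{[G,G]}$, with $G/C$, $K$, $R$, $U$, $H$, $D$ as described below. Then the approximate block diagonals $\bigcup_{hk^{-1}\in lU}(hU\times kU)$ ($l\in H$, union over $h,k\in H$) are exactly the block diagonals $\bigcup_{\dot h\dot k^{-1}=\dot l}(\dot hU\times\dot kU)$ ($\dot l\in D$).
   Context: Let $p_C:G\to G/C$ be the quotient map. $G/C$ is locally compact abelian, identified with $\mathbb{R}^d\times J$ where $d\ge0$ and $J$ has a compact open subgroup $K$. Let $R\subset J$ be a complete set of representatives of $J/K$, $U=p_C^{-1}([-\tfrac12,\tfrac12)^d\times K)$, and $H\subset G$ a complete set of representatives (under $p_C$) of $\mathbb{Z}^d\times R\subset G/C$. Let $D=\mathbb{Z}^d\times J/K$ and for $g\in G$ let $\dot g=(\mathrm{id}\times p_K)(p_C(g))\in\mathbb{R}^d\times J/K$, where $p_K:J\to J/K$; $h\mapsto\dot h$ is a bijection $H\to D$ and $\dot hU$ denotes $hU$. *)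

From HB Require Import structures.
From mathcomp Require Import all_boot all_order all_algebra.
From mathcomp Require Import all_classical all_reals all_analysis.
Set Implicit Arguments. Unset Strict Implicit. Unset Printing Implicit Defensive.
Import Order.TTheory GRing.Theory Num.Theory.
Import numFieldNormedType.Exports.
Local Open Scope classical_set_scope.
Local Open Scope ring_scope.

Record is_topgroup (G : topologicalType) (mul : G -> G -> G) (inv : G -> G)
    (e : G) : Prop := {
  tg_assoc : forall x y z, mul x (mul y z) = mul (mul x y) z;
  tg_mul1g : forall x, mul e x = x;
  tg_mulg1 : forall x, mul x e = x;
  tg_mulVg : forall x, mul (inv x) x = e;
  tg_mulgV : forall x, mul x (inv x) = e;
  tg_mul_cont : continuous (fun xy : G * G => mul xy.1 xy.2);
  tg_inv_cont : continuous inv }.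

Definition is_lc_group (G : topologicalType) (mul : G -> G -> G) (inv : G -> G)
    (e : G) : Prop :=
  [/\ is_topgroup mul inv e, hausdorff_space G & locally_compact [set: G]].

Definition is_subgroup (G : Type) (mul : G -> G -> G) (inv : G -> G) (e : G)
    (S : set G) : Prop :=
  S e /\ forall x y, S x -> S y -> S (mul x (inv y)).

Definition commg (G : Type) (mul : G -> G -> G) (inv : G -> G) (x y : G) : G :=
  mul (mul (inv x) (inv y)) (mul x y).

Definition commutator_subgroup (G : Type) (mul : G -> G -> G) (inv : G -> G)
    (e : G) : set G :=
  [set x | forall S : set G, is_subgroup mul inv e S ->
     (forall a b, S (commg mul inv a b)) -> S x].

Definition top_commutator_subgroup (G : topologicalType) (mul : G -> G -> G)
    (inv : G -> G) (e : G) : set G :=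
  closure (commutator_subgroup mul inv e).

Definition is_addsubgroup (J : zmodType) (S : set J) : Prop :=
  S 0 /\ forall x y, S x -> S y -> S (x - y).

Definition ltrans (G : Type) (mul : G -> G -> G) (x : G) (A : set G) : set G :=
  [set mul x a | a in A].

Definition Zpts (R : realType) (d : nat) : set 'rV[R]_d :=
  [set v | forall i, v ord0 i \is a Num.int].

Definition half_cube (R : realType) (d : nat) : set 'rV[R]_d :=
  [set v | forall i, - (2%:R)^-1 <= v ord0 i /\ v ord0 i < (2%:R)^-1].

(* coset j + K in J, i.e. the element p_K(j) of J/K *)
Definition coset (J : zmodType) (K : set J) (j : J) : set J :=
  [set j + k | k in K].

(* dot g = (id x p_K)(p_C g), an element of R^d x J/K (cosets as sets) *)
Definition dotm (R : realType) (d : nat) (J : zmodType) (G : Type)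
    (p : G -> 'rV[R]_d * J) (K : set J) (g : G) : 'rV[R]_d * set J :=
  ((p g).1, coset K (p g).2).

(* group "difference" x y^{-1} in R^d x J/K: the coset difference is the
   setwise difference A - B = {a - b | a in A, b in B} *)
Definition dot_sub (R : realType) (d : nat) (J : zmodType)
    (x y : 'rV[R]_d * set J) : 'rV[R]_d * set J :=
  (x.1 - y.1, [set a - b | a in x.2 & b in y.2]).

From HB Require Import structures.
From mathcomp Require Import all_boot all_order all_algebra.
From mathcomp Require Import all_classical all_reals all_analysis.
From mathcomp Require Import zify lra.
Import Order.TTheory GRing.Theory Num.Theory.
Import numFieldNormedType.Exports.
Local Open Scope classical_set_scope.
Local Open Scope ring_scope.

(* Both families of sets are indexed by pairs (h, k) of H x H, and for such a
   pair both membership conditions say that y := pC h - pC k - pC l has first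
   coordinate 0 and second coordinate in K.  For the block diagonals this is
   coset arithmetic in J/K.  For the approximate ones, h k^-1 lies in l U iff
   y lies in the box [-1/2,1/2)^d x K; since h, k, l are lattice points, the
   first coordinate of y is an integer vector, and the only integer vector in
   the half-open cube is 0. *)

Lemma int_half_open_eq0 (R : archiRealFieldType) (x : R) :
  x \is a Num.int -> - 2%:R^-1 <= x -> x < 2%:R^-1 -> x = 0.
Proof.
move=> /intrP[m ->] lo hi.
have m_lt1 : m%:~R < 1%:~R :> R by rewrite (_ : 1%:~R = 1 :> R) //; lra.
have m_gtN1 : (-1)%:~R < m%:~R :> R by rewrite (_ : (-1)%:~R = -1 :> R) //; lra.
rewrite !ltr_int in m_lt1 m_gtN1.
by have -> : m = 0 by lia.
Qed.

Lemma ZptsB (R : realType) (d : nat) (v w : 'rV[R]_d) :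
  Zpts v -> Zpts w -> Zpts (v - w).
Proof. by move=> Zv Zw i; rewrite !mxE rpredB. Qed.

Lemma half_cube_Zpts (R : realType) (d : nat) (v : 'rV[R]_d) :
  Zpts v -> half_cube v <-> v = 0.
Proof.
move=> Zv; split=> [cube_v | ->].
  by apply/rowP => i; rewrite mxE; case: (cube_v i); exact: int_half_open_eq0.
by move=> i; rewrite mxE; split; lra.
Qed.

Section Cosets.
Context {J : zmodType} {K : set J}.
Hypothesis K_subgroup : is_addsubgroup K.

Lemma addsubgroup0 : K 0.
Proof. by case: K_subgroup. Qed.

Lemma addsubgroupB x y : K x -> K y -> K (x - y).
Proof. by case: K_subgroup => _; apply. Qed.

Lemma addsubgroupN x : K x -> K (- x).
Proof. by move=> Kx; rewrite -sub0r; exact: addsubgroupB addsubgroup0 Kx. Qed.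

Lemma addsubgroupD x y : K x -> K y -> K (x + y).
Proof. by move=> Kx /addsubgroupN Ky; rewrite -[y]opprK; exact: addsubgroupB. Qed.

Lemma coset_subset x y : K (x - y) -> coset K x `<=` coset K y.
Proof.
move=> Kxy _ [k Kk <-]; exists (x - y + k); first exact: addsubgroupD.
by rewrite addrA [y + _]addrC subrK.
Qed.

Lemma coset_eqP x y : coset K x = coset K y <-> K (x - y).
Proof.
split=> [eq_xy | Kxy].
  have : coset K y x by rewrite -eq_xy; exists 0; [exact: addsubgroup0 | rewrite addr0].
  by case=> k Kk <-; rewrite addrAC subrr add0r.
apply/seteqP; split; apply: coset_subset => //.
by rewrite -opprB; exact: addsubgroupN.
Qed.

Lemma coset_sub x y :
  [set a - b | a in coset K x & b in coset K y] = coset K (x - y).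
Proof.
apply/seteqP; split=> z.
  case=> _ [a Ka <-] [_ [b Kb <-] <-]; exists (a - b); first exact: addsubgroupB.
  by rewrite opprD addrACA.
case=> k Kk <-; exists (x + k); first by exists k.
exists (y + 0); first by exists 0 => //; exact: addsubgroup0.
by rewrite addr0 addrAC.
Qed.

End Cosets.

Lemma dot_sub_dotmE (G : Type) (R : realType) (d : nat) (J : zmodType)
    (p : G -> 'rV[R]_d * J) (K : set J) (h k l : G) :
  is_addsubgroup K ->
  dot_sub (dotm p K h) (dotm p K k) = dotm p K l <->
  (p h - p k - p l).1 = 0 /\ K (p h - p k - p l).2.
Proof.
move=> K_subgroup; rewrite /dot_sub /dotm /= (coset_sub K_subgroup).
split=> [[-> /(coset_eqP K_subgroup) Kd] | [/eqP d1 /(coset_eqP K_subgroup) ->]].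
  by rewrite subrr.
by move: d1; rewrite subr_eq0 => /eqP ->.
Qed.

Section HomTranslates.
Context {G : Type} {mul : G -> G -> G} {inv : G -> G} {e : G}.
Hypotheses (mulA : forall x y z, mul x (mul y z) = mul (mul x y) z)
  (mul1g : forall x, mul e x = x) (mulgV : forall x, mul x (inv x) = e).
Context {V : zmodType} {p : G -> V}.
Hypothesis pM : forall x y, p (mul x y) = p x + p y.

Lemma hom1 : p e = 0.
Proof. by apply: (@addrI _ (p e)); rewrite -pM mul1g addr0. Qed.

Lemma homV x : p (inv x) = - p x.
Proof. by apply: (@addrI _ (p x)); rewrite -pM mulgV hom1 subrr. Qed.

Lemma ltrans_preimageE (B : set V) (l x : G) :
  ltrans mul l (p @^-1` B) x <-> B (p x - p l).
Proof.
split=> [[u Bu <-] | Bxl]; first by rewrite pM addrC addKr.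
exists (mul (inv l) x); first by rewrite /preimage /= pM homV addrC.
by rewrite mulA mulgV mul1g.
Qed.

End HomTranslates.

Theorem mainTheorem7
  (G : topologicalType) (mul : G -> G -> G) (inv : G -> G) (e : G)
  (R : realType) (d : nat) (J : topologicalZmodType)
  (pC : G -> 'rV[R]_d * J) (K : set J) (Rs : set J) (H : set G) :
  (* G is a locally compact group *)
  is_lc_group mul inv e ->
  (* C = closure of [G,G] is compact *)
  compact (top_commutator_subgroup mul inv e) ->
  (* pC : G -> R^d x J is the quotient map G -> G/C composed with a
     topological group isomorphism G/C ~ R^d x J : a continuous, open,
     surjective homomorphism with kernel C *)
  (forall x y, pC (mul x y) = pC x + pC y) ->
  (forall y, exists x, pC x = y) ->
  [set x | pC x = 0] = top_commutator_subgroup mul inv e ->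
  continuous pC ->
  (forall A : set G, open A -> open (pC @` A)) ->
  (* K is a compact open subgroup of J *)
  is_addsubgroup K -> compact K -> open K ->
  (* Rs is a complete set of representatives of J/K *)
  (forall j, exists! r, Rs r /\ K (j - r)) ->
  (* H is a complete set of representatives (under pC) of Z^d x Rs *)
  (forall h, H h -> Zpts (pC h).1 /\ Rs (pC h).2) ->
  (forall y, Zpts y.1 -> Rs y.2 -> exists! h, H h /\ pC h = y) ->
  let U := pC @^-1` [set y | half_cube y.1 /\ K y.2] in
  let dot := dotm pC K in
  forall l, H l ->
    [set z : G * G | exists h k, [/\ H h, H k,
        ltrans mul l U (mul h (inv k)),
        ltrans mul h U z.1 & ltrans mul k U z.2]]
    =
    [set z : G * G | exists h k, [/\ H h, H k,
        dot_sub (dot h) (dot k) = dot l,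
        ltrans mul h U z.1 & ltrans mul k U z.2]].
Proof.
move=> [[mulA mul1g _ _ mulgV _ _] _ _] _ pM _ _ _ _ K_subgroup _ _ _ H_lattice _
  U dot l Hl.
have same_condition h k : H h -> H k ->
    ltrans mul l U (mul h (inv k)) <-> dot_sub (dot h) (dot k) = dot l.
  move=> Hh Hk; rewrite dot_sub_dotmE // (ltrans_preimageE mulA mul1g mulgV pM).
  rewrite /= pM (homV mul1g mulgV pM) half_cube_Zpts //.
  have Zpts_H g : H g -> Zpts (pC g).1 by case/H_lattice.
  by apply: ZptsB; [apply: ZptsB |]; exact: Zpts_H.
apply/seteqP; split=> z [h [k [Hh Hk cond Uh Uk]]]; exists h, k;
  by split=> //; apply/(same_condition h k Hh Hk).
Qed.
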